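(* Let $X$ be a compact metric space and $f\colon X\to X$ a continuous map. Assume there is a sequence of closed sets $X_1\subseteq X_2\subseteq\cdots$ in $X$ with $f(X_i)\subseteq X_i$ for all $i$, $X=\bigcup_{i=1}^\infty X_i$, and $f|_{X_i}\colon X_i\to X_i$ generically chaotic for every $i$. Then $f$ is generically chaotic.
   Context: For continuous $g$ on a compact metric space $(Y,d)$, $(x,y)\in Y^2$ is a Li-Yorke pair if $\liminf_n d(g^n(x),g^n(y))=0$ and $\limsup_n d(g^n(x),g^n(y))>0$; $g$ is generically chaotic if the set of Li-Yorke pairs is residual in $Y^2$. *)

From Stdlib Require Import Reals Lra.
From Coquelicot Require Import Coquelicot.
Open Scope R_scope.

Record is_metric {T : Type} (d : T -> T -> R) : Prop := {
  metric_nonneg : forall x y, 0 <= d x y;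
  metric_zero   : forall x y, d x y = 0 <-> x = y;
  metric_sym    : forall x y, d x y = d y x;
  metric_tri    : forall x y z, d x z <= d x y + d y z
}.

Definition m_open {T : Type} (d : T -> T -> R) (U : T -> Prop) : Prop :=
  forall x, U x -> exists eps, 0 < eps /\ forall y, d x y < eps -> U y.

Definition m_closed {T : Type} (d : T -> T -> R) (C : T -> Prop) : Prop :=
  m_open d (fun x => ~ C x).

Definition m_compact {T : Type} (d : T -> T -> R) : Prop :=
  forall (I : Type) (U : I -> T -> Prop),
    (forall i, m_open d (U i)) ->
    (forall x, exists i, U i x) ->
    exists l : list I, forall x, exists i, List.In i l /\ U i x.

Definition m_continuous {T : Type} (d : T -> T -> R) (g : T -> T) : Prop :=
  forall x eps, 0 < eps -> exists delta, 0 < delta /\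
    forall y, d x y < delta -> d (g x) (g y) < eps.

(** Max metric on T*T; it induces the product topology on Y^2. *)
Definition d2 {T : Type} (d : T -> T -> R) (p q : T * T) : R :=
  Rmax (d (fst p) (fst q)) (d (snd p) (snd q)).

(** Relative topology on a subset S of T*T (S will be A x A, A a subspace). *)
Definition rel_open2 {T : Type} (d : T -> T -> R) (S U : T * T -> Prop) : Prop :=
  (forall p, U p -> S p) /\
  forall p, U p -> exists eps, 0 < eps /\
    forall q, S q -> d2 d p q < eps -> U q.

Definition rel_dense2 {T : Type} (d : T -> T -> R) (S U : T * T -> Prop) : Prop :=
  forall p, S p -> forall eps, 0 < eps -> exists q, U q /\ d2 d p q < eps.

Definition residual2 {T : Type} (d : T -> T -> R) (S L : T * T -> Prop) : Prop :=
  exists U : nat -> T * T -> Prop,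
    (forall n, rel_open2 d S (U n)) /\
    (forall n, rel_dense2 d S (U n)) /\
    (forall p, S p -> (forall n, U n p) -> L p).

(** Li-Yorke pair for g (the metric d restricted to a subspace is still d). *)
Definition LiYorke_pair {T : Type} (d : T -> T -> R) (g : T -> T) (p : T * T) : Prop :=
  let u := fun n : nat => d (Nat.iter n g (fst p)) (Nat.iter n g (snd p)) in
  LimInf_seq u = Finite 0 /\ Rbar_lt (Finite 0) (LimSup_seq u).

(** g restricted to the (g-invariant) subspace A is generically chaotic:
    Li-Yorke pairs of g|_A are residual in A x A. *)
Definition gen_chaotic_on {T : Type} (d : T -> T -> R) (g : T -> T) (A : T -> Prop) : Prop :=
  residual2 d (fun p => A (fst p) /\ A (snd p)) (LiYorke_pair d g).

Definition gen_chaotic {T : Type} (d : T -> T -> R) (g : T -> T) : Prop :=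
  gen_chaotic_on d g (fun _ => True).

From Pilot Require Import Defs.
From Stdlib Require Import Reals Lra Lia Classical ClassicalEpsilon Cantor List.
From Coquelicot Require Import Coquelicot.
Open Scope R_scope.

(* By the Baire theorem for the
   compact space X, the union of the interiors O_i of X_i x X_i is open and
   dense in X^2.  If U_(i,n) are dense open subsets of X_i x X_i whose
   intersection consists of Li-Yorke pairs, then each set
   (exterior of O_i) ∪ (O_i ∩ U_(i,n)) is dense open in X^2, and a pair lying
   in all of them and in the union of the O_i lies in some O_i, hence in every
   U_(i,n). *)

Section Baire.
Context {T : Type} (d : T -> T -> R) (Hm : is_metric d).

Lemma dist_refl x : d x x = 0.
Proof. now apply (metric_zero d Hm). Qed.

Lemma closed_ball_compl_open c r : m_open d (fun y => r < d c y).
Proof.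
  intros y Hy. exists (d c y - r). split; [lra|].
  intros y' Hy'.
  pose proof (metric_tri d Hm c y' y). pose proof (metric_sym d Hm y' y). lra.
Qed.

Lemma closed_ball_avoiding (C : T -> Prop) c r z :
  m_closed d C -> d c z < r -> ~ C z ->
  exists c' r', 0 < r' /\
    (forall y, d c' y <= r' -> d c y < r) /\ (forall y, d c' y <= r' -> ~ C y).
Proof.
  intros HC Hz HnC. destruct (HC z HnC) as [delta [Hdelta Hball]].
  set (r' := Rmin delta (r - d c z) / 2).
  assert (Hpos : 0 < Rmin delta (r - d c z)) by (apply Rmin_pos; lra).
  pose proof (Rmin_l delta (r - d c z)). pose proof (Rmin_r delta (r - d c z)).
  exists z, r'. unfold r'. split; [lra|]. split.
  - intros y Hy. pose proof (metric_tri d Hm c z y). lra.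
  - intros y Hy. apply Hball. lra.
Qed.

Lemma compact_nested_closed_balls (c : nat -> T) (r : nat -> R) :
  m_compact d -> (forall k, 0 <= r k) ->
  (forall k y, d (c (S k)) y <= r (S k) -> d (c k) y <= r k) ->
  exists z, forall k, d (c k) z <= r k.
Proof.
  intros Hc Hr Hnest.
  assert (Hnest' : forall k K y, (k <= K)%nat -> d (c K) y <= r K -> d (c k) y <= r k).
  { intros k K y HkK. induction HkK; auto. }
  apply NNPP; intros Hempty.
  destruct (Hc nat (fun k y => r k < d (c k) y)) as [l Hl].
  - intros k. apply closed_ball_compl_open.
  - intros y. apply NNPP; intros Hy. apply Hempty. exists y. intros k.
    apply Rnot_lt_le. intros Hlt. apply Hy. now exists k.
  - set (K := list_max l).
    destruct (Hl (c K)) as [k [Hk Hlt]].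
    assert (HkK : (k <= K)%nat).
    { apply (proj1 (Forall_forall _ l) (proj1 (list_max_le l K) (le_n K))), Hk. }
    assert (HcK : d (c K) (c K) <= r K) by (rewrite dist_refl; apply Hr).
    pose proof (Hnest' k K (c K) HkK HcK). lra.
Qed.

Lemma compact_baire (Xs : nat -> T -> Prop) :
  m_compact d -> (forall i, m_closed d (Xs i)) -> (forall x, exists i, Xs i x) ->
  forall x eps, 0 < eps -> exists i c r, 0 < r /\
    (forall y, d c y < r -> d x y < eps) /\ (forall y, d c y < r -> Xs i y).
Proof.
  intros Hc Hcl Hcov x eps Heps. apply NNPP; intros Hno.
  set (good := fun cr : T * R =>
    0 < snd cr /\ forall y, d (fst cr) y <= snd cr -> d x y < eps).
  assert (Hstep : forall kc : nat * (T * R), exists cr', good (snd kc) ->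
    good cr' /\ (forall y, d (fst cr') y <= snd cr' ->
                   d (fst (snd kc)) y <= snd (snd kc) /\ ~ Xs (fst kc) y)).
  { intros [k [c r]]. destruct (classic (good (c, r))) as [[Hr Hin] | Hbad];
      [| now exists (c, r)].
    cbn [fst snd] in *.
    assert (Hout : exists z, d c z < r /\ ~ Xs k z).
    { apply NNPP; intros Hall. apply Hno. exists k, c, r.
      split; [exact Hr|]. split.
      - intros y Hy. apply Hin. lra.
      - intros y Hy. apply NNPP; intros Hny. apply Hall. now exists y. }
    destruct Hout as [z [Hz HnXz]].
    destruct (closed_ball_avoiding (Xs k) c r z (Hcl k) Hz HnXz)
      as [c' [r' [Hr' [Hsub Havoid]]]].
    exists (c', r'). intros _. cbn [fst snd]. split; [split|].
    - exact Hr'.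
    - intros y Hy. apply Hin. specialize (Hsub y Hy). lra.
    - intros y Hy. specialize (Hsub y Hy). split; [lra | now apply Havoid]. }
  destruct (choice _ Hstep) as [next Hnext].
  set (s := fix s (k : nat) : T * R :=
              match k with O => (x, eps / 2) | S k => next (k, s k) end).
  assert (Hgood : forall k, good (s k)).
  { induction k as [|k IH].
    - split; cbn; [lra|]. intros y Hy. lra.
    - exact (proj1 (Hnext (k, s k) IH)). }
  destruct (compact_nested_closed_balls (fun k => fst (s k)) (fun k => snd (s k)) Hc)
    as [z Hz].
  - intros k. apply Rlt_le, Hgood.
  - intros k y Hy. exact (proj1 (proj2 (Hnext (k, s k) (Hgood k)) y Hy)).
  - destruct (Hcov z) as [i Hi].
    exact (proj2 (proj2 (Hnext (i, s i) (Hgood i)) z (Hz (S i))) Hi).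
Qed.

End Baire.

Section Residual.
Context {T : Type} (d : T -> T -> R) (Hm : is_metric d).

Lemma d2_refl p : Defs.d2 d p p = 0.
Proof. unfold Defs.d2. rewrite !(dist_refl d Hm). apply Rmax_left, Rle_refl. Qed.

Lemma d2_triangle p q r : Defs.d2 d p r <= Defs.d2 d p q + Defs.d2 d q r.
Proof.
  unfold Defs.d2.
  pose proof (metric_tri d Hm (fst p) (fst q) (fst r)).
  pose proof (metric_tri d Hm (snd p) (snd q) (snd r)).
  pose proof (Rmax_l (d (fst p) (fst q)) (d (snd p) (snd q))).
  pose proof (Rmax_r (d (fst p) (fst q)) (d (snd p) (snd q))).
  pose proof (Rmax_l (d (fst q) (fst r)) (d (snd q) (snd r))).
  pose proof (Rmax_r (d (fst q) (fst r)) (d (snd q) (snd r))).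
  apply Rmax_lub; lra.
Qed.

Definition square (A : T -> Prop) (p : T * T) : Prop := A (fst p) /\ A (snd p).

Definition interior2 (A : T * T -> Prop) (p : T * T) : Prop :=
  exists e, 0 < e /\ forall q, Defs.d2 d p q < e -> A q.

Lemma interior2_sub A p : interior2 A p -> A p.
Proof. intros [e [He HA]]. apply HA. now rewrite d2_refl. Qed.

Lemma interior2_open A : m_open (Defs.d2 d) (interior2 A).
Proof.
  intros p [e [He HA]]. exists (e / 2). split; [lra|].
  intros q Hpq. exists (e / 2). split; [lra|].
  intros q' Hqq'. apply HA. pose proof (d2_triangle p q q'). lra.
Qed.

Lemma interior2_square (A : T -> Prop) c1 c2 r1 r2 :
  0 < r1 -> 0 < r2 -> (forall y, d c1 y < r1 -> A y) -> (forall y, d c2 y < r2 -> A y) ->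
  interior2 (square A) (c1, c2).
Proof.
  intros Hr1 Hr2 HA1 HA2. exists (Rmin r1 r2). split; [now apply Rmin_pos|].
  intros q Hq. unfold Defs.d2 in Hq. cbn [fst snd] in Hq.
  pose proof (Rmin_l r1 r2). pose proof (Rmin_r r1 r2).
  pose proof (Rmax_l (d c1 (fst q)) (d c2 (snd q))).
  pose proof (Rmax_r (d c1 (fst q)) (d c2 (snd q))).
  split; [apply HA1 | apply HA2]; lra.
Qed.

Lemma rel_open2_full (S U : T * T -> Prop) :
  (forall p, S p) -> m_open (Defs.d2 d) U -> rel_open2 d S U.
Proof.
  intros HS HU. split; [intros; apply HS|].
  intros p Hp. destruct (HU p Hp) as [e [He Hball]]. exists e. auto.
Qed.

Definition localize (V U : T * T -> Prop) (p : T * T) : Prop :=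
  interior2 (fun q => ~ V q) p \/ (V p /\ U p).

Lemma localize_open (A V U : T * T -> Prop) :
  m_open (Defs.d2 d) V -> (forall p, V p -> A p) -> rel_open2 d A U ->
  m_open (Defs.d2 d) (localize V U).
Proof.
  intros HV HVA [_ HU] p [Hext | [HVp HUp]].
  - destruct (interior2_open _ p Hext) as [e [He Hball]].
    exists e. split; [exact He|]. intros q Hq. left. now apply Hball.
  - destruct (HV p HVp) as [e1 [He1 Hball1]].
    destruct (HU p HUp) as [e2 [He2 Hball2]].
    exists (Rmin e1 e2). split; [now apply Rmin_pos|].
    intros q Hq. pose proof (Rmin_l e1 e2). pose proof (Rmin_r e1 e2).
    assert (HVq : V q) by (apply Hball1; lra).
    right. split; [exact HVq|]. apply Hball2; [now apply HVA | lra].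
Qed.

Lemma localize_dense (S0 A V U : T * T -> Prop) :
  m_open (Defs.d2 d) V -> (forall p, V p -> A p) -> rel_dense2 d A U ->
  rel_dense2 d S0 (localize V U).
Proof.
  intros HV HVA HU p _ eps Heps.
  destruct (classic (exists q, V q /\ Defs.d2 d p q < eps / 2))
    as [[q [HVq Hpq]] | Hfar].
  - destruct (HV q HVq) as [e [He Hball]].
    assert (Hmin : 0 < Rmin (eps / 2) e) by (apply Rmin_pos; lra).
    destruct (HU q (HVA q HVq) _ Hmin) as [q' [HUq' Hqq']].
    pose proof (Rmin_l (eps / 2) e). pose proof (Rmin_r (eps / 2) e).
    exists q'. split.
    + right. split; [apply Hball; lra | exact HUq'].
    + pose proof (d2_triangle p q q'). lra.
  - exists p. split.
    + left. exists (eps / 2). split; [lra|]. intros q Hq HVq. apply Hfar. now exists q.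
    + rewrite d2_refl. exact Heps.
Qed.

Lemma residual2_of_local (S0 : T * T -> Prop) (A V : nat -> T * T -> Prop)
    (L : T * T -> Prop) :
  (forall p, S0 p) ->
  (forall i, m_open (Defs.d2 d) (V i)) -> (forall i p, V i p -> A i p) ->
  rel_dense2 d S0 (fun p => exists i, V i p) ->
  (forall i, residual2 d (A i) L) ->
  residual2 d S0 L.
Proof.
  intros HS0 HV HVA Hdense HL.
  destruct (choice _ HL) as [U HU].
  set (W := fun m => match m with
                     | O => fun p => exists i, V i p
                     | S m => let (i, n) := of_nat m in localize (V i) (U i n)
                     end).
  exists W. split; [|split].
  - intros [|m]; apply rel_open2_full; auto; cbn [W].
    + intros p [i Hp]. destruct (HV i p Hp) as [e [He Hball]].
      exists e. split; [exact He|]. intros q Hq. exists i. auto.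
    + destruct (of_nat m) as [i n].
      apply (localize_open (A i)); auto. apply HU.
  - intros [|m]; [exact Hdense|]. cbn [W]. destruct (of_nat m) as [i n].
    apply (localize_dense _ (A i)); auto. apply HU.
  - intros p _ HW. destruct (HW O) as [i Hi].
    apply (proj2 (proj2 (HU i))); [now apply HVA|].
    intros n. specialize (HW (S (to_nat (i, n)))). cbn [W] in HW.
    rewrite cancel_of_to in HW. destruct HW as [Hext | [_ HUp]]; [|exact HUp].
    exfalso. exact (interior2_sub _ p Hext Hi).
Qed.

Lemma interior_squares_dense (Xs : nat -> T -> Prop) (S0 : T * T -> Prop) :
  m_compact d -> (forall i, m_closed d (Xs i)) ->
  (forall i x, Xs i x -> Xs (S i) x) -> (forall x, exists i, Xs i x) ->
  rel_dense2 d S0 (fun p => exists i, interior2 (square (Xs i)) p).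
Proof.
  intros Hc Hcl Hmono Hcov [x y] _ eps Heps.
  assert (Hmono' : forall i j z, (i <= j)%nat -> Xs i z -> Xs j z).
  { intros i j z Hij. induction Hij; auto. }
  destruct (compact_baire d Hm Xs Hc Hcl Hcov x eps Heps)
    as [i1 [c1 [r1 [Hr1 [Hnear1 Hin1]]]]].
  destruct (compact_baire d Hm Xs Hc Hcl Hcov y eps Heps)
    as [i2 [c2 [r2 [Hr2 [Hnear2 Hin2]]]]].
  exists (c1, c2). split.
  - exists (i1 + i2)%nat. apply interior2_square with r1 r2; auto.
    + intros z Hz. apply (Hmono' i1); [lia | auto].
    + intros z Hz. apply (Hmono' i2); [lia | auto].
  - unfold Defs.d2. cbn [fst snd].
    apply Rmax_lub_lt; [apply Hnear1 | apply Hnear2]; now rewrite (dist_refl d Hm).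
Qed.

End Residual.

Theorem lemma34 (T : Type) (d : T -> T -> R) (f : T -> T)
  (Xs : nat -> T -> Prop) :
  is_metric d ->
  m_compact d ->
  m_continuous d f ->
  (forall i, m_closed d (Xs i)) ->
  (forall i x, Xs i x -> Xs (S i) x) ->
  (forall i x, Xs i x -> Xs i (f x)) ->
  (forall x, exists i, Xs i x) ->
  (forall i, gen_chaotic_on d f (Xs i)) ->
  gen_chaotic d f.
Proof.
  intros Hm Hc _ Hcl Hmono _ Hcov Hchaos.
  apply (residual2_of_local d Hm _ (fun i => square (Xs i))
           (fun i => interior2 d (square (Xs i)))).
  - now split.
  - intros i. apply (interior2_open d Hm).
  - intros i p. apply (interior2_sub d Hm).
  - exact (interior_squares_dense d Hm Xs _ Hc Hcl Hmono Hcov).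
  - exact Hchaos.
Qed.
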